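(* Let $I$ be an ideal of a metric Hom-Jacobi-Jordan algebra $(J,[\cdot,\cdot],\alpha,B)$. Then (1) $I^{\perp}$ is an ideal of $J$; (2) the centralizer $\mathfrak Z(I)$ of $I$ contains $I^{\perp}$.
   Context: A Hom-Jacobi-Jordan algebra is $(J,[\cdot,\cdot],\alpha)$ with $[\cdot,\cdot]$ symmetric bilinear, $\alpha$ linear and $[\alpha(x),[y,z]]+[\alpha(y),[z,x]]+[\alpha(z),[x,y]]=0$. A metric Hom-Jacobi-Jordan algebra is such an algebra with a nondegenerate symmetric bilinear form $B$ satisfying $B(x,[y,z])=B([x,y],z)$ and $B(\alpha(x),y)=B(x,\alpha(y))$. An ideal is a subspace $I$ with $[x,y]\in I$ and $\alpha(x)\in I$ for all $x\in I$, $y\in J$. $I^\perp=\{x\in J: B(x,y)=0\ \forall y\in I\}$, and $\mathfrak Z(I)=\{x\in J:[x,y]=0\ \forall y\in I\}$. *)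

From HB Require Import structures.
From mathcomp Require Import all_boot all_order all_algebra.
Set Implicit Arguments. Unset Strict Implicit. Unset Printing Implicit Defensive.
Import GRing.Theory.
Local Open Scope ring_scope.

Definition bilinear_map (K : fieldType) (J : lmodType K) (T : lmodType K)
  (f : J -> J -> T) : Prop :=
  (forall a x y z, f (a *: x + y) z = a *: f x z + f y z) /\
  (forall a x y z, f x (a *: y + z) = a *: f x y + f x z).

Definition linear_map (K : fieldType) (J : lmodType K) (f : J -> J) : Prop :=
  forall a x y, f (a *: x + y) = a *: f x + f y.

Definition HomJacobiJordan (K : fieldType) (J : lmodType K)
  (br : J -> J -> J) (alpha : J -> J) : Prop :=
  [/\ bilinear_map br,
      (forall x y, br x y = br y x),
      linear_map alpha &
      (forall x y z, br (alpha x) (br y z) + br (alpha y) (br z x)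
                     + br (alpha z) (br x y) = 0)].

Definition metricHJJ (K : fieldType) (J : lmodType K)
  (br : J -> J -> J) (alpha : J -> J) (B : J -> J -> K^o) : Prop :=
  HomJacobiJordan br alpha /\
  bilinear_map B /\
  (forall x y, B x y = B y x) /\
  (forall x, (forall y, B x y = 0) -> x = 0) /\
  (forall x y z, B x (br y z) = B (br x y) z) /\
  (forall x y, B (alpha x) y = B x (alpha y)).

Definition subspace (K : fieldType) (J : lmodType K) (I : J -> Prop) : Prop :=
  [/\ I 0, (forall x y, I x -> I y -> I (x + y)) &
      (forall a x, I x -> I (a *: x))].

Definition ideal (K : fieldType) (J : lmodType K)
  (br : J -> J -> J) (alpha : J -> J) (I : J -> Prop) : Prop :=
  [/\ subspace I,
      (forall x y, I x -> I (br x y)) &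
      (forall x, I x -> I (alpha x))].

Definition orth (K : fieldType) (J : lmodType K) (B : J -> J -> K^o)
  (I : J -> Prop) : J -> Prop :=
  fun x => forall y, I y -> B x y = 0.

Definition centralizer (K : fieldType) (J : lmodType K) (br : J -> J -> J)
  (I : J -> Prop) : J -> Prop :=
  fun x => forall y, I y -> br x y = 0.

From mathcomp Require Import all_boot all_order all_algebra.
Import GRing.Theory.
Local Open Scope ring_scope.

(* Everything follows from moving brackets and alpha across B: for x in I^perp,
   B [x,y] z = B x [y,z] and B (alpha x) z = B x (alpha z) vanish on z in I
   because I is an ideal, and B [x,y] = 0 forces [x,y] = 0 by nondegeneracy. *)

Section Orthogonal.

Variables (K : fieldType) (J : lmodType K) (B : J -> J -> K^o).

Lemma bilinear_map0l : bilinear_map B -> forall y, B 0 y = 0.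
Proof.
move=> [BlinL _] y; have := BlinL 1 0 0 y.
by rewrite scale1r addr0 scale1r -{1}[B 0 y]addr0 => /addrI/esym.
Qed.

Lemma orth_subspace (I : J -> Prop) : bilinear_map B -> subspace (orth B I).
Proof.
move=> Bbil; have B0 := bilinear_map0l Bbil; have [BlinL _] := Bbil.
split=> [y _ | x y Hx Hy z Iz | a x Hx z Iz]; first exact: B0.
- by rewrite -[x]scale1r BlinL scale1r Hx // Hy // addr0.
- by rewrite -[a *: x]addr0 BlinL Hx // B0 scaler0 addr0.
Qed.

Variables (br : J -> J -> J) (alpha : J -> J) (I : J -> Prop).

Hypothesis B_invariant : forall x y z, B x (br y z) = B (br x y) z.
Hypothesis I_br_closed : forall x y, I x -> I (br x y).

Lemma orth_br_closed :
  (forall x y, br x y = br y x) -> forall x y, orth B I x -> orth B I (br x y).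
Proof.
by move=> brC x y Hx z Iz; rewrite -B_invariant brC; apply/Hx/I_br_closed.
Qed.

Lemma orth_alpha_closed :
  (forall x y, B (alpha x) y = B x (alpha y)) -> (forall x, I x -> I (alpha x)) ->
  forall x, orth B I x -> orth B I (alpha x).
Proof. by move=> Balpha Ialpha x Hx z Iz; rewrite Balpha; apply/Hx/Ialpha. Qed.

Lemma orth_sub_centralizer :
  (forall x, (forall y, B x y = 0) -> x = 0) ->
  forall x, orth B I x -> centralizer br I x.
Proof.
move=> Bnondeg x Hx y Iy; apply: Bnondeg => z.
by rewrite -B_invariant; apply/Hx/I_br_closed.
Qed.

End Orthogonal.

Theorem proposition6p4 (K : fieldType) (J : lmodType K)
  (br : J -> J -> J) (alpha : J -> J) (B : J -> J -> K^o) (I : J -> Prop) :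
  metricHJJ br alpha B -> ideal br alpha I ->
  ideal br alpha (orth B I) /\ (forall x, orth B I x -> centralizer br I x).
Proof.
move=> [[_ brC _ _] [Bbil [_ [Bnondeg [Binv Balpha]]]]] [_ Ibr Ialpha].
split; last exact: orth_sub_centralizer.
split; first exact: orth_subspace.
- exact: orth_br_closed.
- exact: orth_alpha_closed.
Qed.
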